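(* For every integer $n>16$, the generalized Petersen graph $GP(n,3)$ is not $\ell$-distance-balanced for any integer $\ell$ with $3\le \ell<{\rm diam}(GP(n,3))$.
   Context: For a connected graph $G$ and $x,y\in V(G)$, $d_G(x,y)$ denotes the distance and ${\rm diam}(G)$ the diameter. Let $W_{xy}=\{w\in V(G): d_G(w,x)<d_G(w,y)\}$. $G$ is called $\ell$-distance-balanced if $|W_{xy}|=|W_{yx}|$ for every pair $x,y\in V(G)$ with $d_G(x,y)=\ell$. For integers $n\ge 3$ and $1\le k<n/2$, the generalized Petersen graph $GP(n,k)$ has vertex set $\{u_i: i\in\mathbb{Z}_n\}\cup\{v_i: i\in\mathbb{Z}_n\}$ and edge set $\{u_iu_{i+1}: i\in\mathbb{Z}_n\}\cup\{v_iv_{i+k}: i\in\mathbb{Z}_n\}\cup\{u_iv_i: i\in\mathbb{Z}_n\}$. *)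

From mathcomp Require Import all_boot.
Set Implicit Arguments. Unset Strict Implicit. Unset Printing Implicit Defensive.

Section Graphs.
Variable T : finType.
Variable e : rel T.

Fixpoint ball (k : nat) (x : T) : {set T} :=
  match k with
  | 0 => [set x]
  | k'.+1 => ball k' x :|: [set z | [exists y in ball k' x, e y z]]
  end.

(* graph distance: least d with y within distance d of x.
   (Any shortest walk has length < #|T|; unreachable pairs would get #|T|,
   irrelevant here as GP(n,k) is connected.) *)
Definition gdist (x y : T) : nat := find (fun d => y \in ball d x) (iota 0 #|T|).

Definition diam : nat := \max_(x : T) \max_(y : T) gdist x y.

Definition Wset (x y : T) : {set T} := [set w | gdist w x < gdist w y].

Definition dist_balanced (l : nat) : Prop :=
  forall x y : T, gdist x y = l -> #|Wset x y| = #|Wset y x|.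
End Graphs.

(* Generalized Petersen graph GP(n,k): u_i = inl i, v_i = inr i, indices mod n. *)
Definition GPV (n : nat) : finType := ('I_n + 'I_n)%type.

Definition GPadj (n k : nat) : rel (GPV n) :=
  fun a b =>
    match a, b with
    | inl i, inl j => (j == (i + 1) %% n :> nat) || (i == (j + 1) %% n :> nat)
    | inr i, inr j => (j == (i + k) %% n :> nat) || (i == (j + k) %% n :> nat)
    | inl i, inr j => (i == j :> nat)
    | inr i, inl j => (i == j :> nat)
    end.
Arguments GPadj n k : clear implicits.

From mathcomp Require Import all_boot zify.
Set Implicit Arguments. Unset Strict Implicit. Unset Printing Implicit Defensive.

(* A shortest walk in GP(n,3) between positions k apart uses about k/3 jumps along
   the inner ring, k mod 3 steps along the outer ring and the spokes needed in
   between, in whichever direction around the cycle is shorter.  This closed form is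
   certified as the graph distance by a potential argument: it vanishes only at the
   source, grows by at most one along an edge, and decreases along some edge into
   every other vertex.
   For 3 <= l < diam there is an m (3l - 3 or 3l - 7) with d(u_0, v_m) = l.  Comparing
   the distances to u_0 and to v_m position by position, both u_i and v_i lie on the
   same side except in two windows around the positions m/2 and (n + m)/2, where the
   counts only depend on residues modulo 6; in every case v_m gets more vertices, so
   |W(u_0, v_m)| < |W(v_m, u_0)|.  Below n = 24 the counts are evaluated directly. *)

Lemma find_leq_iota a s N : s <= a < s + N -> find (leq a) (iota s N) = a - s.
Proof.
elim: N s => [|N IHN] s /= bounds; first lia.
by case: leqP => ?; [lia | rewrite IHN; lia].
Qed.

Section Potential.
Variables (T : finType) (e : rel T) (x0 : T) (f : T -> nat).
Hypotheses (f_eq0 : forall y, (f y == 0) = (y == x0))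
           (f_edge : forall w z, e w z -> f z <= (f w).+1)
           (f_descent : forall z, 0 < f z -> exists2 w, e w z & f w < f z).

Lemma ball_potential d y : (y \in ball e d x0) = (f y <= d).
Proof.
elim: d y => [|d IHd] y /=; first by rewrite in_set1 leqn0 f_eq0.
rewrite in_setU in_set IHd; apply/idP/idP.
- case/orP=> [/leqW //|/exists_inP[w]].
  by rewrite IHd => fw /f_edge fz; apply: leq_trans fz _.
- rewrite leq_eqVlt ltnS orbC; case/orP=> [-> //|/eqP fy].
  have [w ewy fw] : exists2 w, e w y & f w < f y by apply: f_descent; rewrite fy.
  by apply/orP; right; apply/exists_inP; exists w; rewrite // IHd -ltnS -fy.
Qed.

Lemma gdist_potential y : f y < #|T| -> gdist e x0 y = f y.
Proof.
move=> fy; rewrite /gdist (eq_find (a2 := leq (f y))) => [|d]; last exact: ball_potential.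
by rewrite find_leq_iota ?subn0.
Qed.

End Potential.

Lemma diam_gt (T : finType) (e : rel T) l :
  l < diam e -> exists x y, l < gdist e x y.
Proof.
case: (pickP (fun p : T * T => l < gdist e p.1 p.2)) => [[x y] lxy _|none].
  by exists x, y.
rewrite ltnNge => /negP[]; apply/bigmax_leqP => x _; apply/bigmax_leqP => y _.
by rewrite leqNgt; apply/negbT/(none (x, y)).
Qed.

(* Vertex kinds are booleans: [false] for the outer u_i, [true] for the inner v_i.
   [walk3 a b k] is the length of a shortest walk from a vertex of kind a to the vertex
   of kind b lying k positions ahead that never moves backwards: k %/ 3 inner jumps,
   k %% 3 outer steps and the spokes needed to use the inner ring (two outer vertices
   may also just stay on the outer ring). *)
Definition ring_step (b : bool) := if b then 3 else 1.

Definition walk3 (a b : bool) k :=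
  match a, b with
  | false, false => minn k (k %/ 3 + k %% 3 + 2)
  | true, true => k %/ 3 + k %% 3 + 2 * minn 1 (k %% 3)
  | _, _ => k %/ 3 + k %% 3 + 1
  end.

Definition dist3 n a b k := minn (walk3 a b k) (walk3 a b (n - k)).

Lemma walk3C a b k : walk3 a b k = walk3 b a k.
Proof. by case: a; case: b. Qed.

Lemma walk3_descent a b k : 0 < walk3 a b k ->
  walk3 a (~~ b) k < walk3 a b k \/
  ring_step b <= k /\ walk3 a b (k - ring_step b) < walk3 a b k.
Proof. by case: a; case: b; rewrite /= /ring_step; lia. Qed.

Lemma modn_lt_double k n : k < n + n -> k %% n = if k < n then k else k - n.
Proof.
move=> lt_k_2n; case: (ltnP k n) => [/modn_small //|le_n_k].
by rewrite -{1}(subnK le_n_k) modnDr modn_small // ltn_subLR.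
Qed.

Lemma dist3_eq0 n a b k : 16 < n -> k < n -> dist3 n a b k = 0 -> k = 0 /\ a = b.
Proof. by case: a b => [] []; rewrite /dist3 /=; lia. Qed.

Lemma dist3_0 n a : dist3 n a a 0 = 0.
Proof. by case: a; rewrite /dist3 /=; lia. Qed.

Lemma dist3_lt n a b k : 16 < n -> k < n -> dist3 n a b k < n + n.
Proof. by case: a b => [] []; rewrite /dist3 /=; lia. Qed.

Lemma dist3C n a b k : dist3 n a b k = dist3 n b a k.
Proof. by rewrite /dist3 walk3C [walk3 a b _]walk3C. Qed.

Lemma dist3_sub n a b k : k <= n -> dist3 n a b (n - k) = dist3 n a b k.
Proof. by move=> le_k_n; rewrite /dist3 subKn // minnC. Qed.

Lemma dist3_switch n a b k : 16 < n -> k < n -> dist3 n a b k <= (dist3 n a (~~ b) k).+1.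
Proof. by case: a b => [] []; rewrite /dist3 /=; lia. Qed.

Lemma dist3_step n a b k : 16 < n -> k < n ->
  dist3 n a b ((k + ring_step b) %% n) <= (dist3 n a b k).+1 /\
  dist3 n a b k <= (dist3 n a b ((k + ring_step b) %% n)).+1.
Proof.
move=> *; rewrite modn_lt_double; last by case: b; rewrite /ring_step; lia.
by case: ltnP; case: a b => [] []; rewrite /dist3 /ring_step /=; lia.
Qed.

Lemma dist3_descent n a b k : k < n -> 0 < dist3 n a b k ->
  [\/ dist3 n a (~~ b) k < dist3 n a b k,
      dist3 n a b ((k + ring_step b) %% n) < dist3 n a b k |
      dist3 n a b ((k + (n - ring_step b)) %% n) < dist3 n a b k].
Proof.
move=> lt_k_n.
have dist_l j c : dist3 n a c j <= walk3 a c j by apply: geq_minl.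
have dist_r j c : dist3 n a c j <= walk3 a c (n - j) by apply: geq_minr.
case: (leqP (walk3 a b k) (walk3 a b (n - k))) => [fwd|bwd].
- have -> : dist3 n a b k = walk3 a b k by apply/minn_idPl.
  case/walk3_descent=> [sw|[le_s_k desc]]; first by apply: Or31; apply: leq_ltn_trans sw.
  apply: Or33; apply: leq_ltn_trans desc.
  have -> : k + (n - ring_step b) = k - ring_step b + n by lia.
  by rewrite modnDr modn_small //; lia.
- have -> : dist3 n a b k = walk3 a b (n - k) by apply/minn_idPr/ltnW.
  case/walk3_descent=> [sw|[le_s desc]]; first by apply: Or31; apply: leq_ltn_trans sw.
  apply: Or32; apply: leq_ltn_trans desc.
  have [lt_ks_n|eq_ks_n] : k + ring_step b < n \/ k + ring_step b = n by lia.
    by rewrite modn_small // -subnDA.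
  by rewrite eq_ks_n modnn (_ : n - k - ring_step b = 0) //; lia.
Qed.

Definition inner n (w : GPV n) : bool := if w is inr _ then true else false.
Definition pos n (w : GPV n) : nat := match w with inl i | inr i => i end.
Definition vtx n (b : bool) (i : 'I_n) : GPV n := if b then inr i else inl i.
Definition offset n (x y : GPV n) := (pos y + (n - pos x)) %% n.
Definition gp3_dist n (x y : GPV n) := dist3 n (inner x) (inner y) (offset x y).

Lemma pos_lt n (w : GPV n) : pos w < n.
Proof. by case: w => i; apply: ltn_ord. Qed.

Lemma offset_lt n (x y : GPV n) : 0 < n -> offset x y < n.
Proof. exact: ltn_pmod. Qed.

Lemma modn_addAC i c t n : ((i + c) %% n + t) %% n = ((i + t) %% n + c) %% n.
Proof. by rewrite !modnDml addnAC. Qed.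

Lemma gp3_dist_edge n (x w z : GPV n) : 16 < n -> GPadj n 3 w z ->
  gp3_dist x z <= (gp3_dist x w).+1.
Proof.
move=> n_gt16; rewrite /gp3_dist /offset.
have lt_off (v : GPV n) : (pos v + (n - pos x)) %% n < n by rewrite ltn_mod; lia.
case: w => i; case: z => j /= adj.
- case/orP: adj => /eqP->; rewrite modn_addAC.
    by case: (dist3_step (inner x) false n_gt16 (lt_off (inl i))).
  by case: (dist3_step (inner x) false n_gt16 (lt_off (inl j))).
- by rewrite -(eqP adj); apply: (dist3_switch (inner x) true n_gt16 (lt_off (inl i))).
- by rewrite -(eqP adj); apply: (dist3_switch (inner x) false n_gt16 (lt_off (inl i))).
- case/orP: adj => /eqP->; rewrite modn_addAC.
    by case: (dist3_step (inner x) true n_gt16 (lt_off (inl i))).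
  by case: (dist3_step (inner x) true n_gt16 (lt_off (inl j))).
Qed.

Lemma gp3_dist_descent n (x z : GPV n) : 16 < n -> 0 < gp3_dist x z ->
  exists2 w, GPadj n 3 w z & gp3_dist x w < gp3_dist x z.
Proof.
case: n x z => [//|n] x z n_gt16.
have [b [j ->]] : exists b j, z = vtx b j by case: z => j; [exists false | exists true]; exists j.
have off_lt : offset x (vtx b j) < n.+1 by apply: offset_lt.
pose shift c := Ordinal (ltn_pmod (j + c) (ltn0Sn n)).
rewrite /gp3_dist => /(dist3_descent off_lt)[sw|fwd|bwd]; clear off_lt.
- by exists (vtx (~~ b) j); case: b sw => /=; rewrite ?eqxx.
- exists (vtx b (shift (ring_step b))); last by case: b fwd; rewrite /offset /= modn_addAC.
  by case: b {fwd} => /=; rewrite eqxx orbT.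
- have back : (shift (n.+1 - ring_step b) + ring_step b) %% n.+1 = j.
    rewrite /= modnDml -addnA subnK ?modnDr ?modn_small //.
    by case: (b); rewrite /ring_step; lia.
  exists (vtx b (shift (n.+1 - ring_step b))); first by case: b {bwd} back => /= ->; rewrite eqxx.
  by case: b bwd {back}; rewrite /offset /= modn_addAC.
Qed.

Lemma gp3_dist_eq0 n (x y : GPV n) : 16 < n -> (gp3_dist x y == 0) = (y == x).
Proof.
move=> n_gt16; apply/eqP/eqP => [|->]; last first.
  by rewrite /gp3_dist /offset subnKC ?modnn ?dist3_0 // ltnW ?pos_lt.
have lt_x := pos_lt x; have lt_y := pos_lt y.
case/dist3_eq0=> //; first by apply: offset_lt; lia.
rewrite /offset modn_lt_double; last lia.
have same_pos (i j : 'I_n) :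
    (if j + (n - i) < n then j + (n - i) else j + (n - i) - n) = 0 -> j = i.
  have := ltn_ord i; have := ltn_ord j.
  by case: (ltnP (j + (n - i)) n) => *; apply: ord_inj; lia.
by case: x y {lt_x lt_y} => i [] j //= /same_pos ->.
Qed.

Lemma gdist_gp3 n (x y : GPV n) : 16 < n -> gdist (GPadj n 3) x y = gp3_dist x y.
Proof.
move=> n_gt16; apply: gdist_potential.
- by move=> z; apply: gp3_dist_eq0.
- by move=> w z; apply: gp3_dist_edge.
- by move=> z; apply: gp3_dist_descent.
- by rewrite card_sum card_ord dist3_lt ?offset_lt //; lia.
Qed.

Lemma gp3_distC n (x y : GPV n) : 16 < n -> gp3_dist x y = gp3_dist y x.
Proof.
move=> n_gt16; rewrite /gp3_dist /offset dist3C.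
have lt_x := pos_lt x; have lt_y := pos_lt y.
rewrite !modn_lt_double; [|lia..].
case: (ltnP (pos y + (n - pos x)) n); case: (ltnP (pos x + (n - pos y)) n) => *.
- lia.
- by rewrite -[in RHS]dist3_sub; [congr (dist3 _ _ _ _); lia | lia].
- by rewrite -[in LHS]dist3_sub; [congr (dist3 _ _ _ _); lia | lia].
- by congr (dist3 _ _ _ _); lia.
Qed.

Lemma sum_nat_const_on a b v (f : nat -> nat) :
  (forall i, a <= i < b -> f i = v) -> \sum_(a <= i < b) f i = (b - a) * v.
Proof. by move=> const; rewrite (eq_big_nat _ _ const) sum_nat_const_nat. Qed.

Section Nearer.
Variables n m : nat.

Definition dist_u0 (t : bool) i := dist3 n false t i.
Definition dist_vm (t : bool) i := dist3 n true t ((i + (n - m)) %% n).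
Definition nearer_u0 i := (dist_u0 false i < dist_vm false i) + (dist_u0 true i < dist_vm true i).
Definition nearer_vm i := (dist_vm false i < dist_u0 false i) + (dist_vm true i < dist_u0 true i).

Lemma dist_vmE t i : i < n -> m <= n ->
  dist_vm t i = dist3 n true t (if i < m then m - i else i - m).
Proof.
move=> lt_i_n le_m_n; rewrite /dist_vm; case: ltnP => [lt_i_m|le_m_i].
  rewrite modn_small; last lia.
  by rewrite -dist3_sub; [congr (dist3 _ _ _ _) |]; lia.
by rewrite (_ : i + (n - m) = i - m + n) ?modnDr ?modn_small; lia.
Qed.

Lemma dist_vm_before t i : i < m <= n -> dist_vm t i = dist3 n true t (m - i).
Proof. by case/andP=> lt_i_m le_m_n; rewrite dist_vmE ?lt_i_m //; lia. Qed.

Lemma dist_vm_after t i : m <= i < n -> dist_vm t i = dist3 n true t (i - m).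
Proof. by case/andP=> le_m_i lt_i_n; rewrite dist_vmE ?ltnNge ?le_m_i //; lia. Qed.

Lemma nearer_u0_both i :
  dist_u0 false i < dist_vm false i -> dist_u0 true i < dist_vm true i ->
  nearer_u0 i = 2 /\ nearer_vm i = 0.
Proof.
move=> lt_f lt_t; rewrite /nearer_u0 /nearer_vm lt_f lt_t.
by rewrite (leq_gtF (ltnW lt_f)) (leq_gtF (ltnW lt_t)).
Qed.

Lemma nearer_vm_both i :
  dist_vm false i < dist_u0 false i -> dist_vm true i < dist_u0 true i ->
  nearer_u0 i = 0 /\ nearer_vm i = 2.
Proof.
move=> lt_f lt_t; rewrite /nearer_u0 /nearer_vm lt_f lt_t.
by rewrite (leq_gtF (ltnW lt_f)) (leq_gtF (ltnW lt_t)).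
Qed.

End Nearer.

Lemma card_Wset_u0_vm n m (n_gt16 : 16 < n) (lt_m_n : m < n) :
  let u0 : GPV n := inl (Ordinal (leq_ltn_trans (leq0n m) lt_m_n)) in
  let vm : GPV n := inr (Ordinal lt_m_n) in
  #|Wset (GPadj n 3) u0 vm| = \sum_(0 <= i < n) nearer_u0 n m i /\
  #|Wset (GPadj n 3) vm u0| = \sum_(0 <= i < n) nearer_vm n m i.
Proof.
move=> u0 vm.
have card_sum (P : pred (GPV n)) :
    #|[set w | P w]| = \sum_(i < n) (P (inl i) + P (inr i)).
  rewrite -sum1_card big_mkcond big_sumType big_split.
  by congr (_ + _); apply: eq_bigr => i _; rewrite in_set; case: (P _).
have gdist_u0 w : gdist (GPadj n 3) w u0 = dist_u0 n (inner w) (pos w).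
  rewrite gdist_gp3 // gp3_distC // /gp3_dist /offset /= subn0 modnDr modn_small //.
  exact: pos_lt.
have gdist_vm w : gdist (GPadj n 3) w vm = dist_vm n m (inner w) (pos w).
  by rewrite gdist_gp3 // gp3_distC.
rewrite /Wset !card_sum !big_mkord.
by split; apply: eq_bigr => i _; rewrite !gdist_u0 !gdist_vm.
Qed.

(* [decide_lt_at2 x y x0 y0] settles a comparison [X < Y] of the goal for all values
   of [x] and [y]: which of [X < Y], [Y < X], [X = Y] holds is read off by evaluation
   at the sample point ([x0], [y0]), and that fact is then proved by lia. *)
Ltac decide_lt_by X Y c :=
  let E := fresh in
  lazymatch c with
  | (true, _) => (have E : X < Y by rewrite /dist3 /=; lia);
                 rewrite E (leq_gtF (ltnW E)); clear E
  | (_, true) => (have E : Y < X by rewrite /dist3 /=; lia);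
                 rewrite E (leq_gtF (ltnW E)); clear E
  | _ => (have E : X = Y by rewrite /dist3 /=; lia); rewrite E ltnn; clear E
  end.

Ltac decide_lt_at1 x x0 :=
  match goal with |- context [?X < ?Y] =>
    lazymatch eval pattern x in (X, Y) with ?F _ =>
      let c := eval vm_compute in (let p := F x0 in (p.1 < p.2, p.2 < p.1)) in
      decide_lt_by X Y c
    end
  end.

Ltac decide_lt_at2 x y x0 y0 :=
  match goal with |- context [?X < ?Y] =>
    lazymatch eval pattern x, y in (X, Y) with ?F _ _ =>
      let c := eval vm_compute in (let p := F x0 y0 in (p.1 < p.2, p.2 < p.1)) in
      decide_lt_by X Y c
    end
  end.

Lemma sum_nat12 (f : nat -> nat) a : \sum_(a <= i < a + 12) f i =
  f a + (f (a+1) + (f (a+2) + (f (a+3) + (f (a+4) + (f (a+5) + (f (a+6) +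
  (f (a+7) + (f (a+8) + (f (a+9) + (f (a+10) + (f (a+11) + 0))))))))))).
Proof.
rewrite -{1}(add0n a) big_addn addKn unlock /=.
by rewrite !(addnC a).
Qed.

Definition low_window m : nat * nat :=
  if 12 <= m then (if odd m then (10, 8) else (12, 12)) else
  match m with 6 => (7, 11) | 8 => (9, 11) | 9 => (7, 8) | 11 => (9, 8) | _ => (0, 0) end.
(* The last branch is never reached: below, 6 <= m and m %% 3 != 1. *)

Section Windows.
Variables n m : nat.
Hypotheses (n_ge24 : 24 <= n) (m_ge6 : 6 <= m) (mm_le_n : m + m <= n) (m_mod3 : m %% 3 != 1).

Lemma nearer_head i : i < m %/ 2 - 6 -> nearer_u0 n m i = 2 /\ nearer_vm n m i = 0.
Proof.
move=> lt_i; apply: nearer_u0_both; rewrite dist_vm_before /dist_u0 /dist3 /=; lia.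
Qed.

Lemma nearer_middle i : m %/ 2 + 6 <= i < (n + m) %/ 2 - 6 ->
  nearer_u0 n m i = 0 /\ nearer_vm n m i = 2.
Proof.
move=> i_range; have [lt_i_m|le_m_i] := ltnP i m.
  by apply: nearer_vm_both; rewrite dist_vm_before /dist_u0 /dist3 /=; lia.
by apply: nearer_vm_both; rewrite dist_vm_after /dist_u0 /dist3 /=; lia.
Qed.

Lemma nearer_tail i : (n + m) %/ 2 + 6 <= i < n -> nearer_u0 n m i = 2 /\ nearer_vm n m i = 0.
Proof.
move=> i_range; apply: nearer_u0_both; rewrite dist_vm_after /dist_u0 /dist3 /=; lia.
Qed.

Lemma window_high : let c := (n + m) %/ 2 in
  (\sum_(c - 6 <= i < c + 6) nearer_u0 n m i, \sum_(c - 6 <= i < c + 6) nearer_vm n m i) =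
  if odd (n + m) then (6, 12) else (10, 14).
Proof.
rewrite /= (_ : (n + m) %/ 2 + 6 = (n + m) %/ 2 - 6 + 12); last lia.
rewrite !sum_nat12 /nearer_u0 /nearer_vm /dist_u0 !dist_vm_after; [|lia..].
have [K [r [lt_r6 nmE]]] : exists K r, r < 6 /\ n + m = 6 * K + r.
  by exists ((n + m) %/ 6), ((n + m) %% 6); lia.
have [M mE] : exists M, m = 3 * M \/ m = 3 * M + 2.
  by exists (m %/ 3); move/eqP: m_mod3; lia.
rewrite (_ : (n + m) %/ 2 = 3 * K + r./2); last by rewrite -divn2; lia.
rewrite nmE oddD oddM /=.
(* Once the residues r and m %% 3 are fixed, every comparison in the window is between
   expressions linear in K and M, with the same outcome for all admissible K and M. *)
have nE : n = 6 * K + r - m by lia.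
move: n_ge24 m_ge6 mm_le_n; rewrite nE; clear nE nmE m_mod3 n_ge24 m_ge6 mm_le_n.
by case: mE => ->; case: r lt_r6 => [|[|[|[|[|[|//]]]]]] _ /= *;
  repeat decide_lt_at2 K M 10 6.
Qed.

Lemma window_low : let c := m %/ 2 in
  (\sum_(c - 6 <= i < c + 6) nearer_u0 n m i, \sum_(c - 6 <= i < c + 6) nearer_vm n m i) =
  low_window m.
Proof.
rewrite /= /low_window /nearer_u0 /nearer_vm /dist_u0; case: (leqP 12 m) => [le12m|lt_m12].
  rewrite (_ : m %/ 2 + 6 = m %/ 2 - 6 + 12); last lia.
  rewrite !sum_nat12 !dist_vm_before; [|lia..].
  have [P [r [lt_r6 mE]]] : exists P r, r < 6 /\ m = 6 * P + r.
    by exists (m %/ 6), (m %% 6); lia.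
  rewrite (_ : m %/ 2 = 3 * P + r./2); last by rewrite -divn2; lia.
  move/eqP: m_mod3; move: m_ge6 mm_le_n le12m; rewrite mE oddD oddM /=.
  clear m_ge6 mm_le_n m_mod3 mE.
  by case: r lt_r6 => [|[|[|[|[|[|//]]]]]] _ /= *; try lia;
    repeat decide_lt_at2 n P 60 3.
have : m = 6 \/ m = 8 \/ m = 9 \/ m = 11 by move/eqP: m_mod3; lia.
clear m_ge6 m_mod3 lt_m12.
by case=> [|[|[|]]] ->; set s := index_iota _ _; vm_compute in s;
  rewrite {}/s !big_cons !big_nil !dist_vmE /=; try lia; repeat decide_lt_at1 n 60.
Qed.

Lemma nearer_vm_wins :
  \sum_(0 <= i < n) nearer_u0 n m i < \sum_(0 <= i < n) nearer_vm n m i.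
Proof.
have region a b u v : (forall i, a <= i < b -> nearer_u0 n m i = u /\ nearer_vm n m i = v) ->
    \sum_(a <= i < b) nearer_u0 n m i = (b - a) * u /\
    \sum_(a <= i < b) nearer_vm n m i = (b - a) * v.
  by move=> uv; split; apply: sum_nat_const_on => i /uv[].
have split f : \sum_(0 <= i < n) f i =
    \sum_(0 <= i < m %/ 2 - 6) f i + \sum_(m %/ 2 - 6 <= i < m %/ 2 + 6) f i +
    \sum_(m %/ 2 + 6 <= i < (n + m) %/ 2 - 6) f i +
    \sum_((n + m) %/ 2 - 6 <= i < (n + m) %/ 2 + 6) f i + \sum_((n + m) %/ 2 + 6 <= i < n) f i.
  by rewrite -!big_cat_nat //; lia.
rewrite !split.
have [|-> ->] := region 0 (m %/ 2 - 6) 2 0; first by move=> i /andP[_ /nearer_head].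
have [|-> ->] := region (m %/ 2 + 6) ((n + m) %/ 2 - 6) 0 2; first exact: nearer_middle.
have [|-> ->] := region ((n + m) %/ 2 + 6) n 2 0; first exact: nearer_tail.
move: window_low window_high => /=; rewrite /low_window.
case: (leqP 12 m) => [le12m|lt_m12].
  have := modn2 m; have := modn2 (n + m).
  by case: (odd m); case: (odd (n + m)) => ? ? [-> ->] [-> ->]; lia.
have : m = 6 \/ m = 8 \/ m = 9 \/ m = 11 by move/eqP: m_mod3; lia.
by case=> [|[|[|]]] mE; rewrite mE /= => -[-> ->]; have := modn2 (n + m); rewrite mE;
  case: (odd _) => ? [-> ->]; lia.
Qed.
End Windows.

Definition partner l := if l <= 4 then 3 * l - 3 else 3 * l - 7.

Lemma dist3_partner n a b k l : 16 < n -> k < n -> 3 <= l -> l < dist3 n a b k ->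
  [/\ partner l < n, dist3 n false true (partner l) = l & 6 * l <= n + 14].
Proof.
by rewrite /partner; case: (leqP l 4); case: a b => [] []; rewrite /dist3 /= => *; split; lia.
Qed.

Lemma nearer_vm_wins_small n l : 16 < n <= 23 -> 3 <= l -> 6 * l <= n + 14 ->
  \sum_(0 <= i < n) nearer_u0 n (partner l) i < \sum_(0 <= i < n) nearer_vm n (partner l) i.
Proof.
move=> n_range l_ge3 l_le.
have [nE lE] : (n = 17 \/ n = 18 \/ n = 19 \/ n = 20 \/ n = 21 \/ n = 22 \/ n = 23) /\
               (l = 3 \/ l = 4 \/ l = 5 \/ l = 6) by lia.
move: l_le; case: nE => [|[|[|[|[|[|]]]]]] ->; case: lE => [|[|[|]]] ->.
all: by move=> l_le; try (exfalso; lia); rewrite unlock; vm_compute.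
Qed.

Unset Implicit Arguments.

Theorem proposition2p3 (n : nat) : 16 < n ->
  forall l : nat, 3 <= l -> l < diam (GPadj n 3) ->
    ~ dist_balanced (GPadj n 3) l.
Proof.
move=> n_gt16 l l_ge3 /diam_gt[x [y]]; rewrite gdist_gp3 // /gp3_dist => l_lt balanced.
have off_lt : offset x y < n by apply: offset_lt; lia.
have [lt_m_n dist_m l_le] := dist3_partner n_gt16 off_lt l_ge3 l_lt.
have [] := card_Wset_u0_vm n_gt16 lt_m_n.
set u0 := inl _; set vm := inr _ => card_u0 card_vm.
have dist_u0_vm : gdist (GPadj n 3) u0 vm = l.
  by rewrite gdist_gp3 // /gp3_dist /offset /= subn0 modnDr modn_small.
apply/eqP: (balanced _ _ dist_u0_vm); rewrite card_u0 card_vm neq_ltn; apply/orP; left.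
have [n_le23|n_ge24] := leqP n 23; first by apply: nearer_vm_wins_small => //; lia.
by apply: nearer_vm_wins => //; rewrite /partner; case: (leqP l 4) => ?; try apply/eqP; lia.
Qed.
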